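(* Let $k$ be a field of characteristic $0$, $n\geq3$, let $\phi'$ be a regular quadratic form over $k$ in $n-2$ variables, $\phi=\langle1\rangle\perp(-\phi')$, and let $X\subset\mathbb A^n_k$ be the zero locus of $x_1x_2-\phi(1,x_3,\dots,x_n)$. Let $(R,m,\kappa)$ be a discrete valuation ring containing $k$, with fraction field $K$ and valuation $v$. Let $h\in X(K)$ with $h_i=h^*(x_i)$, and suppose $\phi_\kappa$ is anisotropic. (1) If $h$ lifts to $X({\rm Spec}\,R)$, then $v(h_1)=v(h_2)=0$. (2) If $h$ does not lift to $X({\rm Spec}\,R)$, then $v(h_1)<0$ or $v(h_2)<0$, and $\min\{v(h_1),v(h_2)\}=\min\{v(h_1),v(h_2),\dots,v(h_n)\}$.
   Context: $\phi_\kappa$ is the base change of $\phi$ to the residue field $\kappa$; $\langle 1\rangle$ is the form $x^2$ and $\perp$ the orthogonal sum. *)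

From HB Require Import structures.
From mathcomp Require Import all_boot all_order all_algebra.
From mathcomp Require Import constructive_ereal.
Set Implicit Arguments. Unset Strict Implicit. Unset Printing Implicit Defensive.
Import Order.TTheory GRing.Theory Num.Theory.
Local Open Scope ring_scope.

Definition qform (R : comPzRingType) (m : nat) (B : 'M[R]_m) (x : 'I_m -> R) : R :=
  \sum_(i < m) \sum_(j < m) B i j * x i * x j.

(* phi = <1> _|_ (- phi'), phi' given by the Gram matrix B, in variables (x0, x). *)
Definition phi_form (R : comPzRingType) (m : nat) (B : 'M[R]_m) (x0 : R)
  (x : 'I_m -> R) : R := x0 ^+ 2 - qform B x.

(* A normalized discrete valuation on the field K, with values in Z \cup {+oo}.
   Its valuation ring R = {x | 0 <= v x} is the DVR, with fraction field K. *)
Definition discrete_valuation (K : fieldType) (v : K -> \bar int) : Prop :=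
  [/\ forall x, v x = +oo%E <-> x = 0,
      forall x, v x <> -oo%E,
      forall x y, v (x * y)%R = (v x + v y)%E,
      forall x y, (Order.min (v x) (v y) <= v (x + y)%R)%E &
      exists pi, v pi = (1%:Z)%:E ].

(* res : K -> kappa restricted to R = {0 <= v} is a surjective ring morphism onto
   the field kappa whose kernel is the maximal ideal m = {0 < v};
   i.e. kappa is (isomorphic to) the residue field R/m. *)
Definition residue_map (K : fieldType) (v : K -> \bar int) (kappa : fieldType)
  (res : K -> kappa) : Prop :=
  [/\ forall x y, (0 <= v x)%E -> (0 <= v y)%E -> res (x + y) = res x + res y,
      forall x y, (0 <= v x)%E -> (0 <= v y)%E -> res (x * y) = res x * res y,
      res 1 = 1,
      forall x, (0 <= v x)%E -> (res x = 0 <-> (0 < v x)%E) &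
      forall z : kappa, exists x, (0 <= v x)%E /\ res x = z ].

From HB Require Import structures.
From mathcomp Require Import all_boot all_order all_algebra.
From mathcomp Require Import constructive_ereal.
From mathcomp Require Import zify ring.
Set Implicit Arguments. Unset Strict Implicit. Unset Printing Implicit Defensive.
Import Order.TTheory GRing.Theory Num.Theory.
Local Open Scope ring_scope.

(* If h_1 h_2 = phi(y_0, y) with all coordinates integral and h_1 or h_2 in the
   maximal ideal, then reducing modulo m gives a zero of the anisotropic form
   phi_kappa, so y_0 and all y_i lie in m.  For an integral point (y_0 = 1) this
   forces v(h_1) = v(h_2) = 0.  For a non-integral point, if the minimum of all
   valuations were attained only at some h_j with j >= 3, dividing by h_j would
   give an integral point with y_j = 1 and h_1/h_j in m, the same contradiction. *)

Definition phi_anisotropic (F : fieldType) (m : nat) (A : 'M[F]_m) : Prop :=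
  forall (y0 : F) (y : 'I_m -> F),
    phi_form A y0 y = 0 -> y0 = 0 /\ (forall i, y i = 0).

Lemma phi_formZ (R : comPzRingType) (m : nat) (A : 'M[R]_m) (a c : R)
    (y : 'I_m -> R) :
  phi_form A (a * c) (fun i => y i * c) = phi_form A a y * c ^+ 2.
Proof.
rewrite /phi_form /qform mulrBl big_distrl /= exprMn; congr (_ - _).
by apply: eq_bigr => i _; rewrite big_distrl /=; apply: eq_bigr => j _; ring.
Qed.

Section DiscreteValuation.
Variables (K : fieldType) (v : K -> \bar int).
Hypothesis Hv : discrete_valuation v.

Lemma dval0 : v 0 = +oo%E.
Proof. by case: Hv => H0 _ _ _ _; apply/H0. Qed.

Lemma dval_finite (x : K) : x != 0 -> exists r : int, v x = r%:E.
Proof.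
case: Hv => H0 Hn _ _ _ /eqP x_neq0.
case vx: (v x) => [r| |]; first by exists r.
- by case: x_neq0; apply/H0.
- by case: (Hn x).
Qed.

Lemma dvalM (x y : K) : v (x * y) = (v x + v y)%E.
Proof. by case: Hv. Qed.

Lemma dval1 : v 1 = 0%E.
Proof.
have [r v1E] := dval_finite (oner_neq0 K).
by have := dvalM 1 1; rewrite mulr1 v1E -EFinD => -[rr]; congr EFin; lia.
Qed.

Lemma dval_sqr1 (x : K) : x * x = 1 -> v x = 0%E.
Proof.
move=> xx1; have x_neq0 : x != 0.
  by apply: contra_eq_neq xx1 => ->; rewrite mul0r eq_sym oner_neq0.
have [r vxE] := dval_finite x_neq0.
by have := dvalM x x; rewrite xx1 dval1 vxE -EFinD => -[rr]; congr EFin; lia.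
Qed.

Lemma dvalN (x : K) : v (- x) = v x.
Proof. by rewrite -mulN1r dvalM (@dval_sqr1 (-1)) ?mulrNN ?mulr1 ?add0e. Qed.

Lemma dvalV (x : K) : x != 0 -> v x^-1 = (- v x)%E.
Proof.
move=> x_neq0; have [r vx] := dval_finite x_neq0.
have [s vVx] := dval_finite (invr_neq0 x_neq0).
have := dvalM x x^-1; rewrite mulfV // dval1 vx vVx -EFinD => -[rs].
by rewrite -EFinN; congr EFin; lia.
Qed.

Lemma dvalD_ge0 (x y : K) : (0 <= v x)%E -> (0 <= v y)%E -> (0 <= v (x + y))%E.
Proof.
case: Hv => _ _ _ Hmin _ vx vy.
by apply: le_trans (Hmin x y); rewrite le_min vx vy.
Qed.

Lemma dvalB_ge0 (x y : K) : (0 <= v x)%E -> (0 <= v y)%E -> (0 <= v (x - y))%E.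
Proof. by move=> vx vy; apply: dvalD_ge0; rewrite ?dvalN. Qed.

Lemma dvalM_ge0 (x y : K) : (0 <= v x)%E -> (0 <= v y)%E -> (0 <= v (x * y))%E.
Proof. by move=> vx vy; rewrite dvalM adde_ge0. Qed.

Lemma dvalM_gt0 (x y : K) : (0 <= v x)%E -> (0 <= v y)%E ->
  (0 < v x)%E \/ (0 < v y)%E -> (0 < v (x * y))%E.
Proof.
move=> vx vy; rewrite dvalM.
by case=> [/lt_le_trans/(_ (leeDl _ vy))|/lt_le_trans/(_ (leeDr _ vx))].
Qed.

Variables (kappa : fieldType) (res : K -> kappa).
Hypothesis Hres : residue_map v res.

Lemma res0 : res 0 = 0.
Proof.
case: Hres => _ _ _ Hker _.
by apply/(Hker 0); rewrite dval0 ?le0y ?lt0y.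
Qed.

Lemma resB (x y : K) : (0 <= v x)%E -> (0 <= v y)%E -> res (x - y) = res x - res y.
Proof.
case: Hres => resD _ _ _ _ vx vy.
by rewrite -[in res x](subrK y x) (resD (x - y)) ?dvalB_ge0 // addrK.
Qed.

Let integral_res (x : K) (y : kappa) := (0 <= v x)%E /\ res x = y.

Lemma integral_res_sum (I : finType) (F : I -> K) :
  (forall i, (0 <= v (F i))%E) -> integral_res (\sum_i F i) (\sum_i res (F i)).
Proof.
case: Hres => resD _ _ _ _ vF.
apply: (big_ind2 integral_res); first by split; rewrite ?dval0 ?le0y ?res0.
  by move=> x1 x2 y1 y2 [v1 <-] [v2 <-]; split; rewrite ?dvalD_ge0 ?resD.
by move=> i _; split.
Qed.

Lemma integral_res_qform (m : nat) (A : 'M[K]_m) (y : 'I_m -> K) :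
  (forall i j, (0 <= v (A i j))%E) -> (forall i, (0 <= v (y i))%E) ->
  integral_res (qform A y) (qform (map_mx res A) (res \o y)).
Proof.
case: Hres => _ resM _ _ _ vA vy.
have vAyy i j : (0 <= v (A i j * y i * y j))%E by rewrite !dvalM_ge0.
rewrite /integral_res /qform.
have [vq ->] := integral_res_sum (fun i => proj1 (integral_res_sum (vAyy i))).
split=> //; apply: eq_bigr => i _; rewrite (proj2 (integral_res_sum (vAyy i))).
by apply: eq_bigr => j _; rewrite mxE !resM ?dvalM_ge0.
Qed.

Lemma res_phi_form (m : nat) (A : 'M[K]_m) (y0 : K) (y : 'I_m -> K) :
  (forall i j, (0 <= v (A i j))%E) -> (0 <= v y0)%E -> (forall i, (0 <= v (y i))%E) ->
  res (phi_form A y0 y) = phi_form (map_mx res A) (res y0) (res \o y).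
Proof.
case: Hres => _ resM _ _ _ vA vy0 vy.
have [vq rq] := integral_res_qform vA vy.
by rewrite /phi_form resB ?rq ?expr2 ?resM ?dvalM_ge0.
Qed.

Lemma phi_form_coords_gt0 (m : nat) (A : 'M[K]_m) (z1 z2 y0 : K) (y : 'I_m -> K) :
  (forall i j, (0 <= v (A i j))%E) -> phi_anisotropic (map_mx res A) ->
  z1 * z2 = phi_form A y0 y ->
  (0 <= v z1)%E -> (0 <= v z2)%E -> (0 <= v y0)%E -> (forall i, (0 <= v (y i))%E) ->
  (0 < v z1)%E \/ (0 < v z2)%E ->
  (0 < v y0)%E /\ (forall i, (0 < v (y i))%E).
Proof.
case: Hres => _ _ _ Hker _ vA anisoA z12E vz1 vz2 vy0 vy vz12.
have : res (z1 * z2) = 0 by apply/Hker; [rewrite dvalM_ge0 | rewrite dvalM_gt0].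
rewrite z12E res_phi_form // => /anisoA[ry0 ry].
by split=> [|i]; apply/Hker => //; exact: ry.
Qed.

Lemma integral_hyperbolic_units (m : nat) (A : 'M[K]_m) (h1 h2 : K) (h : 'I_m -> K) :
  (forall i j, (0 <= v (A i j))%E) -> phi_anisotropic (map_mx res A) ->
  h1 * h2 = phi_form A 1 h ->
  (0 <= v h1)%E -> (0 <= v h2)%E -> (forall i, (0 <= v (h i))%E) ->
  v h1 = 0%E /\ v h2 = 0%E.
Proof.
move=> vA anisoA hE vh1 vh2 vh.
have v1_ge0 : (0 <= v 1)%E by rewrite dval1.
suff nz : ~ ((0 < v h1)%E \/ (0 < v h2)%E).
  by split; apply/eqP; rewrite eq_le ?vh1 ?vh2 andbT leNgt; apply/negP => pos; apply: nz; auto.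
move=> /(phi_form_coords_gt0 vA anisoA hE vh1 vh2 v1_ge0 vh)[].
by rewrite dval1 ltxx.
Qed.

Lemma hyperbolic_min_coord (m : nat) (A : 'M[K]_m) (h1 h2 : K) (h : 'I_m -> K)
    (j : 'I_m) :
  (forall i j, (0 <= v (A i j))%E) -> phi_anisotropic (map_mx res A) ->
  h1 * h2 = phi_form A 1 h ->
  (v (h j) < 0)%E -> (forall i, (v (h j) <= v (h i))%E) ->
  (v h1 <= v (h j))%E \/ (v h2 <= v (h j))%E.
Proof.
move=> vA anisoA hE vhj_lt0 vhj_min.
have [|lt1] := leP (v h1) (v (h j)); first by left.
have [|lt2] := leP (v h2) (v (h j)); first by right.
exfalso.
have hj_neq0 : h j != 0 by apply: contraTneq vhj_lt0 => ->; rewrite dval0 -leNgt le0y.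
have vhj_fin : v (h j) \is a fin_num by have [r ->] := dval_finite hj_neq0.
have vdiv x : v (x / h j) = (v x - v (h j))%E by rewrite dvalM dvalV.
have vdiv_ge0 x : (v (h j) <= v x)%E -> (0 <= v (x / h j))%E.
  by rewrite vdiv sube_ge0 ?vhj_fin.
have vinv_ge0 : (0 <= v (1 * (h j)^-1))%E by rewrite mul1r dvalV // oppe_ge0 ltW.
have vh1_gt0 : (0 < v (h1 / h j))%E by rewrite vdiv sube_gt0.
have scaledE : (h1 / h j) * (h2 / h j) = phi_form A (1 * (h j)^-1) (fun i => h i / h j).
  by rewrite phi_formZ -hE; ring.
have [_ /(_ j)] := phi_form_coords_gt0 vA anisoA scaledE (vdiv_ge0 _ (ltW lt1))
  (vdiv_ge0 _ (ltW lt2)) vinv_ge0 (fun i => vdiv_ge0 _ (vhj_min i)) (or_introl vh1_gt0).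
by rewrite mulfV // dval1 ltxx.
Qed.

Lemma nonintegral_hyperbolic_min (m : nat) (A : 'M[K]_m) (h1 h2 : K) (h : 'I_m -> K) :
  (0 < m)%N -> (forall i j, (0 <= v (A i j))%E) -> phi_anisotropic (map_mx res A) ->
  h1 * h2 = phi_form A 1 h ->
  ~ [/\ (0 <= v h1)%E, (0 <= v h2)%E & forall i, (0 <= v (h i))%E] ->
  ((v h1 < 0)%E \/ (v h2 < 0)%E) /\
  Order.min (v h1) (v h2) =
    Order.min (v h1) (Order.min (v h2) (\big[Order.min/+oo%E]_(i < m) v (h i))).
Proof.
move=> m_gt0 vA anisoA hE not_integral.
have [j _ minE] :=
  eq_bigmin (Ordinal m_gt0) xpredT (fun i => v (h i)) isT (fun i _ => leey _).
have hj_min i : (v (h j) <= v (h i))%E by rewrite -minE bigmin_le.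
rewrite minE.
have integral_of_min : (0 <= Order.min (v h1) (v h2))%E -> (0 <= v (h j))%E ->
    [/\ (0 <= v h1)%E, (0 <= v h2)%E & forall i, (0 <= v (h i))%E].
  by rewrite le_min => /andP[? ?] hj_ge0; split=> // i; apply: le_trans hj_ge0 _.
have min12_le_hj : (Order.min (v h1) (v h2) <= v (h j))%E.
  rewrite leNgt lt_min; apply/negP => /andP[hj_lt1 hj_lt2].
  have hj_lt0 : (v (h j) < 0)%E.
    rewrite ltNge; apply/negP => hj_ge0; apply: not_integral.
    by apply: (integral_of_min _ hj_ge0); rewrite le_min !(le_trans hj_ge0) ?ltW.
  by case: (hyperbolic_min_coord vA anisoA hE hj_lt0 hj_min);
    rewrite leNgt ?hj_lt1 ?hj_lt2.
split.
  apply/orP; rewrite -gt_min ltNge; apply/negP => min_ge0; apply: not_integral.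
  exact: integral_of_min min_ge0 (le_trans min_ge0 min12_le_hj).
by rewrite minA (min_l min12_le_hj).
Qed.

End DiscreteValuation.

Theorem lemma4p7 (k : fieldType) (n : nat) (B : 'M[k]_(n - 2))
  (K : fieldType) (iota : {rmorphism k -> K}) (v : K -> \bar int)
  (kappa : fieldType) (res : K -> kappa)
  (h1 h2 : K) (h : 'I_(n - 2) -> K) :
  [pchar k] =i pred0 ->
  (3 <= n)%N ->
  B^T = B -> \det B != 0 ->
  discrete_valuation v ->
  (forall c : k, (0 <= v (iota c))%E) ->
  residue_map v res ->
  h1 * h2 - phi_form (map_mx iota B) 1 h = 0 ->
  (forall (y0 : kappa) (y : 'I_(n - 2) -> kappa),
      phi_form (map_mx (res \o iota) B) y0 y = 0 -> y0 = 0 /\ (forall i, y i = 0)) ->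
  ([/\ (0 <= v h1)%E, (0 <= v h2)%E & forall i, (0 <= v (h i))%E] ->
     v h1 = 0%E /\ v h2 = 0%E)
  /\
  (~ [/\ (0 <= v h1)%E, (0 <= v h2)%E & forall i, (0 <= v (h i))%E] ->
     ((v h1 < 0)%E \/ (v h2 < 0)%E) /\
     Order.min (v h1) (v h2) =
       Order.min (v h1) (Order.min (v h2) (\big[Order.min/+oo%E]_(i < n - 2) v (h i)))).
Proof.
move=> _ n_ge3 _ _ Hv vB Hres /eqP; rewrite subr_eq0 => /eqP hE.
rewrite map_mx_comp => anisoB.
have vA i j : (0 <= v (map_mx iota B i j))%E by rewrite mxE.
split=> [[vh1 vh2 vh] | not_integral].
  exact: (integral_hyperbolic_units Hv Hres vA anisoB hE vh1 vh2 vh).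
by apply: (nonintegral_hyperbolic_min Hv Hres _ vA anisoB hE not_integral); lia.
Qed.
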